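(* Let $X$ be a graph with bounded geometry and let $\phi:X\to G$ be an injective $(a,b)$-rough isometry to a Cayley graph $(G,S)$ of a group of polynomial volume growth. Then there exist constants $0<C_1<1$, $C_2>0$ and $R_1$ such that for all $y\in G$ and $p\in X$ with $d^S(\phi(p),y)\leq b$, and all $R\geq R_1$, $$|B_p^X(R)|\geq C_2\,|B_y^G(C_1R)|.$$
   Context: Graphs are connected, locally finite, without self-loops or multiple edges; $d^X$ is the path-length metric on $X$; bounded geometry means all vertex degrees are at most some $\Delta$. For a group $G$ with finite symmetric generating set $S$, the Cayley graph has $x\sim y$ iff $x=ys$ for some $s\in S$, with word metric $d^S$. $G$ has polynomial volume growth if $|B^G_e(n)|\leq Cn^A$ for some $C,A>0$ and all $n\geq1$. $B_p^X(R)=\{x\in X:d^X(x,p)\leq R\}$, $B_y^G(R)=\{z\in G:d^S(z,y)\leq R\}$, and $|\cdot|$ denotes cardinality. An $(a,b)$-rough isometry ($a\geq 1,b\geq0$) is a map $\phi$ with $a^{-1}d^X(x,y)-b\leq d^S(\phi(x),\phi(y))\leq a\,d^X(x,y)+b$ for all $x,y\in X$ and $d^S(z,\phi(X))\leq b$ for all $z\in G$. *)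

From Stdlib Require Import Reals Lra List ClassicalEpsilon.
Import ListNotations.
Open Scope R_scope.

Inductive walk {V : Type} (adj : V -> V -> Prop) : nat -> V -> V -> Prop :=
| walk0 : forall x, walk adj 0 x x
| walkS : forall n x y z, adj x y -> walk adj n y z -> walk adj (S n) x z.

(* Path-length metric: the least length of a walk from x to y
   (an arbitrary value if x and y are not connected; all graphs considered
   below are connected). *)
Definition gdist {V : Type} (adj : V -> V -> Prop) (x y : V) : nat :=
  epsilon (inhabits 0%nat)
    (fun n => walk adj n x y /\ forall m, walk adj m x y -> (n <= m)%nat).

(* Cardinality of a finite set (arbitrary value for infinite sets). *)
Definition ncard {T : Type} (A : T -> Prop) : nat :=
  epsilon (inhabits 0%nat)
    (fun n => exists l : list T, NoDup l /\ length l = n /\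
                 forall x, In x l <-> A x).

Definition is_finite {T : Type} (A : T -> Prop) : Prop :=
  exists l : list T, forall x, A x -> In x l.

Definition is_graph {V : Type} (adj : V -> V -> Prop) : Prop :=
  (forall x y, adj x y -> adj y x) /\
  (forall x, ~ adj x x) /\
  (forall x, is_finite (adj x)) /\
  (forall x y, exists n, walk adj n x y).

Definition bounded_geometry {V : Type} (adj : V -> V -> Prop) : Prop :=
  exists Delta : nat, forall x, (ncard (adj x) <= Delta)%nat.

Definition ball {V : Type} (adj : V -> V -> Prop) (p : V) (r : R) : V -> Prop :=
  fun x => INR (gdist adj x p) <= r.

Definition is_group {G : Type} (mul : G -> G -> G) (one : G) (inv : G -> G) : Prop :=
  (forall x y z, mul x (mul y z) = mul (mul x y) z) /\
  (forall x, mul one x = x) /\ (forall x, mul x one = x) /\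
  (forall x, mul (inv x) x = one) /\ (forall x, mul x (inv x) = one).

Definition sym_generating {G : Type} (mul : G -> G -> G) (one : G) (inv : G -> G)
  (S : list G) : Prop :=
  (forall s, In s S -> In (inv s) S) /\
  (forall g, exists w : list G, Forall (fun s => In s S) w /\ g = fold_right mul one w).

Definition cayley_adj {G : Type} (mul : G -> G -> G) (S : list G) (x y : G) : Prop :=
  exists s, In s S /\ x = mul y s.

Definition poly_growth {G : Type} (mul : G -> G -> G) (one : G) (S : list G) : Prop :=
  exists C A : R, 0 < C /\ 0 < A /\
    forall n : nat, (1 <= n)%nat ->
      INR (ncard (ball (cayley_adj mul S) one (INR n))) <= C * Rpower (INR n) A.

Definition rough_isom {V G : Type} (adjX : V -> V -> Prop) (adjG : G -> G -> Prop)
  (a b : R) (phi : V -> G) : Prop :=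
  1 <= a /\ 0 <= b /\
  (forall x y,
      / a * INR (gdist adjX x y) - b <= INR (gdist adjG (phi x) (phi y)) /\
      INR (gdist adjG (phi x) (phi y)) <= a * INR (gdist adjX x y) + b) /\
  (forall z, exists x, INR (gdist adjG z (phi x)) <= b).

(* Every ball B_y^G(r/(2a)) is covered by the sets B^G_{phi(x)}(b), x in B_p^X(r):
   a point z of the former is b-close to some phi(x) by coarse surjectivity, and
   the lower rough-isometry bound puts x within 3ab + r/2 <= r of p.  Each ball
   of radius b in the Cayley graph has at most K = sum_{k <= b} |S|^k elements,
   so |B_y^G(r/(2a))| <= K |B_p^X(r)|; injectivity of phi makes B_p^X(r) finite. *)
From Stdlib Require Import Reals List Lra Lia ZArith Wf_nat Classical ClassicalEpsilon.
Open Scope R_scope.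

Lemma exists_nat_ge (r : R) : exists n : nat, r <= INR n.
Proof.
  destruct (Rle_dec r 0) as [Hr | Hr].
  - exists 0%nat; simpl; lra.
  - destruct (archimed r) as [Hup _].
    assert (Hup0 : (0 <= up r)%Z) by (apply le_IZR; simpl; lra).
    exists (Z.to_nat (up r)).
    rewrite INR_IZR_INZ, Z2Nat.id by exact Hup0; lra.
Qed.

Section Walks.
Context {V : Type} (adj : V -> V -> Prop).

Lemma walk_snoc n x y z : walk adj n x y -> adj y z -> walk adj (S n) x z.
Proof.
  induction 1 as [x | n x y' y Hxy _ IH]; intros Hyz.
  - apply walkS with z; [exact Hyz | apply walk0].
  - apply walkS with y'; auto.
Qed.

Lemma walk_app n m x y z : walk adj n x y -> walk adj m y z -> walk adj (n + m) x z.
Proof.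
  induction 1 as [x | n x y' y Hxy _ IH]; intros Hyz; simpl; auto.
  apply walkS with y'; auto.
Qed.

Hypothesis adj_sym : forall x y, adj x y -> adj y x.

Lemma walk_rev n x y : walk adj n x y -> walk adj n y x.
Proof.
  induction 1 as [x | n x y' y Hxy _ IH]; [apply walk0 |].
  apply walk_snoc with y'; auto.
Qed.

Hypothesis adj_connected : forall x y, exists n, walk adj n x y.

Lemma gdist_spec x y :
  walk adj (gdist adj x y) x y /\
  forall m, walk adj m x y -> (gdist adj x y <= m)%nat.
Proof.
  unfold gdist; apply epsilon_spec.
  destruct (dec_inh_nat_subset_has_unique_least_element
              (fun n => walk adj n x y) (fun n => classic _) (adj_connected x y))
    as [n [Hn _]].
  exists n; exact Hn.
Qed.

Lemma gdist_triangle x y z : (gdist adj x z <= gdist adj x y + gdist adj y z)%nat.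
Proof.
  apply (proj2 (gdist_spec x z)), walk_app with y; apply gdist_spec.
Qed.

Lemma gdist_sym x y : gdist adj x y = gdist adj y x.
Proof.
  apply Nat.le_antisymm; apply gdist_spec, walk_rev, gdist_spec.
Qed.

Lemma gdist_triangle_R x y z :
  INR (gdist adj x z) <= INR (gdist adj x y) + INR (gdist adj y z).
Proof. rewrite <- plus_INR; apply le_INR, gdist_triangle. Qed.

End Walks.

Lemma ncard_spec {T : Type} (A : T -> Prop) : is_finite A ->
  exists l, NoDup l /\ (forall x, In x l <-> A x) /\ ncard A = length l.
Proof.
  intros [l0 Hl0].
  set (eq_dec := fun x y : T => excluded_middle_informative (x = y)).
  set (inA := fun x => if excluded_middle_informative (A x) then true else false).
  set (l := nodup eq_dec (filter inA l0)).
  assert (Hl : forall x, In x l <-> A x).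
  { intros x; unfold l; rewrite nodup_In, filter_In; unfold inA.
    destruct (excluded_middle_informative (A x)); firstorder congruence. }
  assert (Nl : NoDup l) by apply NoDup_nodup.
  exists l; split; [exact Nl | split; [exact Hl |]].
  unfold ncard.
  destruct (epsilon_spec (inhabits 0%nat)
    (fun n => exists l' : list T, NoDup l' /\ length l' = n /\ forall x, In x l' <-> A x))
    as [l' [Nl' [<- Hl']]]; [exists (length l), l; auto |].
  apply Nat.le_antisymm; apply NoDup_incl_length; auto;
    intros x Hx; [apply Hl, Hl' | apply Hl', Hl]; exact Hx.
Qed.

Lemma ncard_le_cover {T U : Type} (A : T -> Prop) (B : U -> Prop)
    (F : U -> list T) (K : nat) :
  is_finite B -> (forall u, length (F u) = K) ->
  (forall t, A t -> exists u, B u /\ In t (F u)) ->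
  (ncard A <= K * ncard B)%nat.
Proof.
  intros FB HF Hcov.
  destruct (ncard_spec B FB) as [lB [_ [HlB ->]]].
  assert (Hincl : forall t, A t -> In t (flat_map F lB)).
  { intros t At; destruct (Hcov t At) as [u [Bu Hu]].
    apply in_flat_map; exists u; split; [apply HlB |]; assumption. }
  destruct (ncard_spec A (ex_intro _ _ Hincl)) as [lA [NlA [HlA ->]]].
  rewrite Nat.mul_comm, <- (flat_map_constant_length F lB (fun u _ => HF u)).
  apply NoDup_incl_length; [exact NlA |].
  intros t Ht; apply Hincl, HlA, Ht.
Qed.

Lemma is_finite_subset {T : Type} (A B : T -> Prop) :
  (forall x, A x -> B x) -> is_finite B -> is_finite A.
Proof. intros HAB [l Hl]; exists l; auto. Qed.

Lemma is_finite_preimage_inj {U T : Type} (f : U -> T) (B : T -> Prop) :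
  (forall x y, f x = f y -> x = y) -> is_finite B -> is_finite (fun x => B (f x)).
Proof.
  intros Hinj [l Hl].
  assert (Hpre : exists lU, forall x, In (f x) l -> In x lU).
  { clear Hl; induction l as [| t l [lU HlU]]; [exists nil; simpl; tauto |].
    destruct (classic (exists x, f x = t)) as [[x0 Hx0] | Hnone].
    - exists (x0 :: lU); intros x [Hx | Hx]; simpl; auto.
      left; apply Hinj; congruence.
    - exists lU; intros x [Hx | Hx]; auto.
      exfalso; eauto. }
  destruct Hpre as [lU HlU]; exists lU; auto.
Qed.

Section Cayley.
Context {G : Type} (mul : G -> G -> G) (one : G) (inv : G -> G) (S : list G).
Hypothesis group : is_group mul one inv.
Hypothesis generating : sym_generating mul one inv S.

Let cay := cayley_adj mul S.

Lemma cayley_adj_sym x y : cay x y -> cay y x.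
Proof.
  destruct group as [Hassoc [_ [Hone_r [_ Hinv_r]]]].
  intros [s [Hs ->]]; exists (inv s); split; [apply generating, Hs |].
  rewrite <- Hassoc, Hinv_r, Hone_r; reflexivity.
Qed.

Lemma cayley_walk_word w : Forall (fun s => In s S) w ->
  forall y, walk cay (length w) (mul y (fold_right mul one w)) y.
Proof.
  destruct group as [Hassoc [_ [Hone_r _]]].
  induction 1 as [| s w Hs _ IH]; intros y; simpl.
  - rewrite Hone_r; apply walk0.
  - rewrite Hassoc; apply walk_snoc with (mul y s); [apply IH | exists s; auto].
Qed.

Lemma cayley_connected x y : exists n, walk cay n x y.
Proof.
  destruct group as [Hassoc [Hone_l [_ [_ Hinv_r]]]].
  destruct (proj2 generating (mul (inv y) x)) as [w [Hw Hword]].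
  exists (length w).
  replace x with (mul y (fold_right mul one w)) at 1
    by (rewrite <- Hword, Hassoc, Hinv_r, Hone_l; reflexivity).
  apply cayley_walk_word, Hw.
Qed.

Fixpoint right_translates (k : nat) (w : G) : list G :=
  match k with
  | O => w :: nil
  | Datatypes.S k => flat_map (fun u => map (mul u) S) (right_translates k w)
  end.

Lemma length_right_translates k w : length (right_translates k w) = (length S ^ k)%nat.
Proof.
  induction k as [| k IH]; simpl; [reflexivity |].
  rewrite (flat_map_constant_length (c := length S)), IH by (intros; apply length_map).
  apply Nat.mul_comm.
Qed.

Lemma walk_in_right_translates k z w : walk cay k z w -> In z (right_translates k w).
Proof.
  induction 1 as [x | k x y z [s [Hs ->]] _ IH]; simpl; [auto |].
  apply in_flat_map; exists y; split; [exact IH | apply in_map, Hs].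
Qed.

Definition ball_list (N : nat) (w : G) : list G :=
  flat_map (fun k => right_translates k w) (seq 0 (Datatypes.S N)).

Lemma length_ball_list N w :
  length (ball_list N w) = list_sum (map (fun k => length S ^ k) (seq 0 (Datatypes.S N)))%nat.
Proof.
  unfold ball_list; rewrite length_flat_map.
  f_equal; apply map_ext; intros k; apply length_right_translates.
Qed.

Lemma in_ball_list N w z : INR (gdist cay z w) <= INR N -> In z (ball_list N w).
Proof.
  intros Hd; apply INR_le in Hd.
  apply in_flat_map; exists (gdist cay z w); split.
  - apply in_seq; lia.
  - apply walk_in_right_translates, gdist_spec, cayley_connected.
Qed.

Lemma cayley_ball_finite w r : is_finite (ball cay w r).
Proof.
  destruct (exists_nat_ge r) as [N HN].
  exists (ball_list N w); intros z Hz; apply in_ball_list.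
  unfold ball in Hz; lra.
Qed.

End Cayley.

Section RoughIsometry.
Context {V G : Type} (adjX : V -> V -> Prop) (adjG : G -> G -> Prop).
Hypothesis adjG_sym : forall x y, adjG x y -> adjG y x.
Hypothesis adjG_connected : forall x y, exists n, walk adjG n x y.
Context (a b : R) (phi : V -> G).
Hypothesis rough : rough_isom adjX adjG a b phi.

Lemma rough_isom_ball_image p r x :
  ball adjX p r x -> ball adjG (phi p) (a * r + b) (phi x).
Proof.
  destruct rough as [Ha [_ [Hbounds _]]].
  unfold ball; intros Hx.
  pose proof (proj2 (Hbounds x p)).
  assert (a * INR (gdist adjX x p) <= a * r) by (apply Rmult_le_compat_l; lra).
  lra.
Qed.

Lemma rough_isom_ball_pullback p y z x r :
  INR (gdist adjG (phi p) y) <= b -> 6 * a * b <= r ->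
  ball adjG y (/ (2 * a) * r) z -> INR (gdist adjG z (phi x)) <= b ->
  ball adjX p r x.
Proof.
  destruct rough as [Ha [Hb [Hbounds _]]].
  unfold ball; intros Hpy Hr Hz Hzx.
  pose proof (proj1 (Hbounds x p)) as Hlower.
  pose proof (gdist_triangle_R adjG adjG_connected (phi x) z (phi p)) as T1.
  pose proof (gdist_triangle_R adjG adjG_connected z y (phi p)) as T2.
  rewrite (gdist_sym adjG adjG_sym adjG_connected (phi x) z) in T1.
  rewrite (gdist_sym adjG adjG_sym adjG_connected y (phi p)) in T2.
  set (d := INR (gdist adjX x p)) in *.
  assert (Hd : / a * d <= 3 * b + / (2 * a) * r) by lra.
  apply Rmult_le_compat_l with (r := a) in Hd; [| lra].
  replace (a * (/ a * d)) with d in Hd by (field; lra).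
  replace (a * (3 * b + / (2 * a) * r)) with (3 * (a * b) + r / 2) in Hd
    by (field; lra).
  lra.
Qed.

End RoughIsometry.

Theorem lemma4p3
  (V : Type) (adjX : V -> V -> Prop)
  (G : Type) (mul : G -> G -> G) (one : G) (inv : G -> G) (S : list G)
  (a b : R) (phi : V -> G) :
  is_graph adjX -> bounded_geometry adjX ->
  is_group mul one inv -> sym_generating mul one inv S ->
  poly_growth mul one S ->
  (forall x y, phi x = phi y -> x = y) ->
  rough_isom adjX (cayley_adj mul S) a b phi ->
  exists C1 C2 R1 : R, 0 < C1 < 1 /\ 0 < C2 /\
    forall (y : G) (p : V),
      INR (gdist (cayley_adj mul S) (phi p) y) <= b ->
      forall r : R, R1 <= r ->
        INR (ncard (ball adjX p r)) >=
        C2 * INR (ncard (ball (cayley_adj mul S) y (C1 * r))).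
Proof.
  intros _ _ Hgroup Hgen _ Hinj Hrough.
  pose proof (cayley_adj_sym mul one inv S Hgroup Hgen) as Hsym.
  pose proof (cayley_connected mul one inv S Hgroup Hgen) as Hconn.
  pose proof (proj1 Hrough) as Ha.
  destruct (exists_nat_ge b) as [N HN].
  set (K := list_sum (map (fun k => length S ^ k) (seq 0 (Datatypes.S N)))%nat).
  assert (HK : 0 <= INR K) by apply pos_INR.
  exists (/ (2 * a)), (/ (INR K + 1)), (6 * a * b).
  split; [split | split].
  - apply Rinv_0_lt_compat; lra.
  - rewrite <- Rinv_1; apply Rinv_lt_contravar; lra.
  - apply Rinv_0_lt_compat; lra.
  - intros y p Hpy r Hr.
    assert (Hcount : (ncard (ball (cayley_adj mul S) y (/ (2 * a) * r))
                      <= K * ncard (ball adjX p r))%nat).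
    { apply ncard_le_cover with (F := fun x => ball_list mul S N (phi x)).
      - apply is_finite_subset
          with (B := fun x => ball (cayley_adj mul S) (phi p) (a * r + b) (phi x)).
        + intros x; apply (rough_isom_ball_image adjX _ a b phi Hrough).
        + apply is_finite_preimage_inj; [exact Hinj | exact (cayley_ball_finite mul one inv S Hgroup Hgen _ _)].
      - intros x; apply length_ball_list.
      - intros z Hz; destruct (proj2 (proj2 (proj2 Hrough)) z) as [x Hx].
        exists x; split.
        + eapply rough_isom_ball_pullback; eauto.
        + apply (in_ball_list mul one inv S Hgroup Hgen); lra. }
    apply le_INR in Hcount; rewrite mult_INR in Hcount.
    apply Rle_ge, Rmult_le_reg_l with (r := INR K + 1); [lra |].
    rewrite <- Rmult_assoc, Rinv_r, Rmult_1_l by lra.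
    pose proof (pos_INR (ncard (ball adjX p r))); nra.
Qed.
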